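(* Let $\delta\ge 3$ and $n\ge 8\delta-7$ be integers. Then $$\rho_{\mathcal D}\big(K_2\vee(K_{n-\delta-1}\cup K_{\delta-1})\big)\ >\ \rho_{\mathcal D}\big(K_\delta\vee(K_{n-2\delta+1}\cup(\delta-1)K_1)\big).$$
   Context: For a connected graph $G$, $\mathcal D(G)$ is its distance matrix (entry $(i,j)$ is the distance between the $i$-th and $j$-th vertices) and $\rho_{\mathcal D}(G)$ its largest eigenvalue. $K_m$ is the complete graph on $m$ vertices, $tK_1$ the edgeless graph on $t$ vertices, $\cup$ disjoint union, and $\vee$ the join. *)

From HB Require Import structures.
From mathcomp Require Import all_boot all_order all_algebra.
From mathcomp Require Import reals.
Set Implicit Arguments. Unset Strict Implicit. Unset Printing Implicit Defensive.
Import Order.TTheory GRing.Theory Num.Theory.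
Local Open Scope ring_scope.

(* A simple graph is a symmetric irreflexive relation e : rel T on a finType T. *)

Definition complete_graph (m : nat) : rel 'I_m := fun x y => x != y.
Definition edgeless_graph (t : nat) : rel 'I_t := fun _ _ => false.

Definition gunion (T1 T2 : finType) (e1 : rel T1) (e2 : rel T2) : rel (T1 + T2)%type :=
  fun x y => match x, y with
             | inl a, inl b => e1 a b
             | inr a, inr b => e2 a b
             | _, _ => false
             end.

Definition gjoin (T1 T2 : finType) (e1 : rel T1) (e2 : rel T2) : rel (T1 + T2)%type :=
  fun x y => match x, y with
             | inl a, inl b => e1 a b
             | inr a, inr b => e2 a b
             | _, _ => true
             end.

Fixpoint walk_le (T : finType) (e : rel T) (k : nat) (x y : T) : bool :=
  match k with
  | 0 => x == y
  | k'.+1 => walk_le e k' x y || [exists z, walk_le e k' x z && e z y]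
  end.

(* Graph distance: least k with a walk of length <= k from x to y
   (for connected graphs this is the usual shortest-path distance,
    since every distance is < #|T|). *)
Definition gdist (T : finType) (e : rel T) (x y : T) : nat :=
  find (fun k => walk_le e k x y) (iota 0 #|T|).

Definition dist_matrix (R : pzRingType) (T : finType) (e : rel T) : 'M[R]_#|T| :=
  \matrix_(i, j) (gdist e (enum_val i) (enum_val j))%:R.

Definition is_largest_eigenvalue (R : realType) (n : nat) (A : 'M[R]_n) (a : R) : Prop :=
  eigenvalue A a /\ (forall b, eigenvalue A b -> b <= a).

Arguments complete_graph m : clear implicits.
Arguments edgeless_graph t : clear implicits.

From HB Require Import structures.
From mathcomp Require Import all_boot all_order all_algebra.
From mathcomp Require Import reals polyrcf.
From mathcomp Require Import ring lra zify.
Import Order.TTheory GRing.Theory Num.Theory.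
Set Implicit Arguments. Unset Strict Implicit. Unset Printing Implicit Defensive.
Local Open Scope ring_scope.

(* Both graphs have diameter 2 and an equitable partition into three parts (a clique
   joined to two uniform graphs), so for the root l > n - delta of the characteristic
   cubic of the 3x3 quotient matrix the quotient eigenvector is positive, and a positive
   eigenvector of a nonnegative symmetric matrix belongs to its largest eigenvalue.
   With N = n and D = delta the two cubics satisfy
     (l + 2D - 1) char2 l = (l + D + 1) char1 l + (D - 1)(D - 2)((5D - 2) l + 2D(N - 2D) + 5D - 2),
   so char2 is positive at the Perron root a of char1, while char2 (N - D) < 0; hence
   char2 has a root in (N - D, a), and it is the largest eigenvalue of the second graph. *)

Lemma largest_eigenvalue_pos_eigenvector (R : realType) m (A : 'M[R]_m)
    (u : 'rV[R]_m) a (j0 : 'I_m) :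
  (forall i j, 0 <= A i j) -> (forall i j, A i j = A j i) ->
  (forall j, 0 < u 0 j) -> u *m A = a *: u -> is_largest_eigenvalue A a.
Proof.
move=> A_ge0 A_sym u_gt0 uA; split.
  apply/eigenvalueP; exists u => //; apply/eqP => u0.
  by have := u_gt0 j0; rewrite u0 mxE ltxx.
move=> b /eigenvalueP [w wA w_neq0].
pose S := \sum_j `|w 0 j| * u 0 j.
have S_gt0 : 0 < S.
  have [j wj_neq0] : exists j, w 0 j != 0.
    apply/existsP; apply: contraR w_neq0 => /existsPn w0.
    by apply/eqP/rowP => j; rewrite mxE; apply/eqP; rewrite -[_ == _]negbK w0.
  rewrite /S (bigD1 j) //=; apply: ltr_wpDr.
    by apply: sumr_ge0 => i _; rewrite mulr_ge0 // ltW.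
  by rewrite mulr_gt0 // normr_gt0.
have wA_le j : `|b| * `|w 0 j| <= \sum_i `|w 0 i| * A i j.
  rewrite -normrM; have := congr1 (fun M : 'rV_m => M 0 j) wA; rewrite !mxE => <-.
  apply: le_trans (ler_norm_sum _ _ _) _.
  by apply: ler_sum => i _; rewrite normrM (ger0_norm (A_ge0 _ _)).
suff : `|b| * S <= a * S by rewrite ler_pM2r // => /(le_trans (ler_norm b)).
have uA_row i : \sum_j A i j * u 0 j = a * u 0 i.
  have := congr1 (fun M : 'rV_m => M 0 i) uA; rewrite !mxE => <-.
  by apply: eq_bigr => j _; rewrite mulrC A_sym.
have -> : a * S = \sum_j (\sum_i `|w 0 i| * A i j) * u 0 j.
  rewrite /S mulr_sumr; under [RHS]eq_bigr do rewrite mulr_suml.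
  rewrite exchange_big; apply: eq_bigr => i _.
  by rewrite mulrCA -uA_row mulr_sumr; apply: eq_bigr => j _; rewrite mulrA.
rewrite /S mulr_sumr; apply: ler_sum => j _.
by rewrite mulrA ler_wpM2r ?wA_le ?ltW.
Qed.

Lemma dist_matrix_largest_eigenvalue (R : realType) (T : finType) (e : rel T)
    (f : T -> R) a (x0 : T) :
  (forall x y, gdist e x y = gdist e y x) -> (forall x, 0 < f x) ->
  (forall x, \sum_y f y * (gdist e y x)%:R = a * f x) ->
  is_largest_eigenvalue (dist_matrix R e) a.
Proof.
move=> gdist_sym f_gt0 fE.
apply: (@largest_eigenvalue_pos_eigenvector _ _ _ (\row_j f (enum_val j)) a (enum_rank x0)).
- by move=> i j; rewrite mxE ler0n.
- by move=> i j; rewrite !mxE gdist_sym.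
- by move=> j; rewrite mxE.
apply/rowP => j; rewrite !mxE -fE; under eq_bigr do rewrite !mxE.
by rewrite -(big_enum_val (fun y => f y * (gdist e y (enum_val j))%:R)).
Qed.

Definition diam2_dist (T : finType) (e : rel T) (x y : T) : nat :=
  if x == y then 0 else if e x y then 1 else 2.

Lemma exists_eq_and (T : finType) (P : pred T) x : [exists z, (x == z) && P z] = P x.
Proof.
apply/existsP/idP => [[z /andP[/eqP-> //]] | Px].
by exists x; rewrite eqxx.
Qed.

Lemma gdist_diam2 (T : finType) (e : rel T) x y : (2 < #|T|)%N ->
  (x != y -> ~~ e x y -> exists z, e x z && e z y) -> gdist e x y = diam2_dist e x y.
Proof.
rewrite /gdist /diam2_dist; case: #|T| => [|[|[|k]]] // _ common_nb.
rewrite /= exists_eq_and; case: eqP => [//|/eqP x_neq_y] /=.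
case: ifP => [//|/negbT exy].
have [z /andP[exz ezy]] := common_nb x_neq_y exy.
rewrite (negbTE exy) /=.
suff -> : [exists z, ((x == z) || [exists z', (x == z') && e z' z]) && e z y] by [].
by apply/existsP; exists z; rewrite exists_eq_and exz ezy orbT.
Qed.

Lemma gdist_join_complete (T : finType) (e : rel T) d x y :
    (0 < d)%N -> (2 < d + #|T|)%N ->
  gdist (gjoin (complete_graph d) e) x y = diam2_dist (gjoin (complete_graph d) e) x y.
Proof.
move=> d_gt0 card_gt2; apply: gdist_diam2; first by rewrite card_sum card_ord.
case: x y => [a|a] [b|b] //= ab_neq; last by exists (inl (Ordinal d_gt0)).
by rewrite /complete_graph negbK => /eqP ab; rewrite ab eqxx in ab_neq.
Qed.

Lemma sum_ord_off_point (R : pzRingType) k (a : 'I_k) (x : R) m :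
  \sum_(i < k) x * (if i == a then 0 else m)%:R = x * (m * k.-1)%:R.
Proof.
rewrite (bigD1 a) //= eqxx mulr0 add0r.
rewrite (eq_bigr (fun=> x * m%:R)) => [|i /negbTE -> //].
by rewrite sumr_const cardC1 card_ord -mulrnAr -mulr_natr natrM.
Qed.

Definition part_weight (R : Type) (d r q : nat) (al be ga : R)
    (x : 'I_d + ('I_r + 'I_q)) : R :=
  match x with inl _ => al | inr (inl _) => be | inr (inr _) => ga end.

Section JoinOfUniformGraphs.
Variables (R : realType) (d r q : nat) (c1 c2 : bool) (e1 : rel 'I_r) (e2 : rel 'I_q).
Hypothesis e1_uniform : forall a b, a != b -> e1 a b = c1.
Hypothesis e2_uniform : forall a b, a != b -> e2 a b = c2.

Local Notation G := (gjoin (complete_graph d) (gunion e1 e2)).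

Lemma diam2_dist_join y x : diam2_dist G y x =
  match y, x with
  | inl b, inl a => if b == a then 0 else 1
  | inr (inl b), inr (inl a) => if b == a then 0 else if c1 then 1 else 2
  | inr (inr b), inr (inr a) => if b == a then 0 else if c2 then 1 else 2
  | inr _, inr _ => 2
  | _, _ => 1
  end.
Proof.
rewrite /diam2_dist.
case: y x => [b|[b|b]] [a|[a|a]] //=; rewrite ?(inj_eq inr_inj) ?(inj_eq inl_inj);
  case: eqP => [//|/eqP ba].
- by rewrite /complete_graph ba.
- by rewrite e1_uniform.
- by rewrite e2_uniform.
Qed.

Lemma join_dist_row_sum (al be ga : R) x :
  \sum_y part_weight al be ga y * (diam2_dist G y x)%:R =
  match x with
  | inl _ => (d.-1)%:R * al + r%:R * be + q%:R * ga
  | inr (inl _) => d%:R * al + (r.-1)%:R * ((if c1 then 1 else 2)%:R * be) + q%:R * (2 * ga)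
  | inr (inr _) => d%:R * al + r%:R * (2 * be) + (q.-1)%:R * ((if c2 then 1 else 2)%:R * ga)
  end.
Proof.
under eq_bigr do rewrite diam2_dist_join.
rewrite !big_sumType /=.
by case: x => [a|[a|a]]; rewrite sum_ord_off_point !sumr_const !card_ord; ring.
Qed.

Lemma join_largest_eigenvalue (al be ga l : R) :
    (0 < d)%N -> (2 < d + r + q)%N -> 0 < al -> 0 < be -> 0 < ga ->
    (d.-1)%:R * al + r%:R * be + q%:R * ga = l * al ->
    d%:R * al + (r.-1)%:R * ((if c1 then 1 else 2)%:R * be) + q%:R * (2 * ga) = l * be ->
    d%:R * al + r%:R * (2 * be) + (q.-1)%:R * ((if c2 then 1 else 2)%:R * ga) = l * ga ->
  is_largest_eigenvalue (dist_matrix R G) l.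
Proof.
move=> d_gt0 card_gt2 al_gt0 be_gt0 ga_gt0 eq_al eq_be eq_ga.
have gdistE x y : gdist G x y = diam2_dist G x y.
  by apply: gdist_join_complete; rewrite // card_sum !card_ord addnA.
apply: (@dist_matrix_largest_eigenvalue _ _ _ (part_weight al be ga) l (inl (Ordinal d_gt0))).
- move=> x y; rewrite !gdistE !diam2_dist_join.
  by case: x y => [b|[b|b]] [a|[a|a]] //; rewrite eq_sym.
- by case => [a|[a|a]].
- by move=> x; under eq_bigr do rewrite gdistE; rewrite join_dist_row_sum; case: x => [a|[a|a]].
Qed.

End JoinOfUniformGraphs.

(* Characteristic polynomials of the quotient matrices of the two graphs of the theorem,
   in the variables N = n and D = delta. *)
Definition char1 (R : ringType) (N D l : R) : R :=
  l ^+ 3 + (3 - N) * l ^+ 2 + (N - 3 * N * D + 3 * D ^+ 2) * l + (D ^+ 2 - N * D).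

Definition char2 (R : ringType) (N D l : R) : R :=
  l ^+ 3 + (5 - N - D) * l ^+ 2 + (5 * D ^+ 2 - 2 * N * D - N - 8 * D + 8) * l
  + (N * D ^+ 2 - 3 * N * D - 2 * D ^+ 3 + 8 * D ^+ 2 - 8 * D + 4).

Lemma join_K2_cliques_largest_eigenvalue (R : realType) (n k : nat) (l : R) :
    (2 <= k)%N -> (k + 2 <= n)%N -> n%:R - k%:R < l -> char1 n%:R k%:R l = 0 ->
  is_largest_eigenvalue (dist_matrix R
    (gjoin (complete_graph 2) (gunion (complete_graph (n - k - 1)) (complete_graph (k - 1))))) l.
Proof.
move=> k_ge2 n_ge l_gt root1.
have pE : (n - k - 1)%:R = n%:R - k%:R - 1 :> R by rewrite !natrB; [ring | lia ..].
have p1E : (n - k - 1).-1%:R = n%:R - k%:R - 2 :> R.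
  by rewrite -subn1 !natrB; [ring | lia ..].
have qE : (k - 1)%:R = k%:R - 1 :> R by rewrite natrB; [ring | lia ..].
have q1E : (k - 1).-1%:R = k%:R - 2 :> R by rewrite -subn1 !natrB; [ring | lia ..].
have k_gt1 : 1 < k%:R :> R by rewrite ltr1n.
have n_ge' : k%:R + 2 <= n%:R :> R by rewrite -natrD ler_nat.
(* These weights solve the first two quotient equations for every l; the third one is
   char1 n k l = 0. *)
apply: (join_largest_eigenvalue (c1 := true) (c2 := true) _ _
  (al := (k%:R - 1) * (l + n%:R - k%:R)) (be := 2 * (k%:R - 1) * l)
  (ga := (l - n%:R + k%:R) * (l + 1))) => //=; rewrite ?pE ?p1E ?qE ?q1E.
- lia.
- by apply: mulr_gt0; lra.
- by do 2?apply: mulr_gt0; lra.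
- by apply: mulr_gt0; lra.
- ring.
- ring.
- by rewrite -[LHS]addr0 -root1 /char1; ring.
Qed.

Lemma join_Kk_clique_coclique_largest_eigenvalue (R : realType) (n k : nat) (l : R) :
    (2 <= k)%N -> (2 * k <= n)%N -> n%:R - k%:R < l -> char2 n%:R k%:R l = 0 ->
  is_largest_eigenvalue (dist_matrix R
    (gjoin (complete_graph k)
       (gunion (complete_graph (n - 2 * k + 1)) (edgeless_graph (k - 1))))) l.
Proof.
move=> k_ge2 n_ge l_gt root2.
have dE : k.-1%:R = k%:R - 1 :> R by rewrite -subn1 natrB; [ring | lia ..].
have rE : (n - 2 * k + 1)%:R = n%:R - 2 * k%:R + 1 :> R.
  by rewrite natrD natrB ?natrM; [ring | lia ..].
have r1E : (n - 2 * k + 1).-1%:R = n%:R - 2 * k%:R :> R.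
  by rewrite -subn1 addnK natrB ?natrM; [ring | lia ..].
have qE : (k - 1)%:R = k%:R - 1 :> R by rewrite natrB; [ring | lia ..].
have q1E : (k - 1).-1%:R = k%:R - 2 :> R by rewrite -subn1 !natrB; [ring | lia ..].
have k_gt1 : 1 < k%:R :> R by rewrite ltr1n.
have n_ge' : 2 * k%:R <= n%:R :> R by rewrite -natrM ler_nat.
apply: (join_largest_eigenvalue (c1 := true) (c2 := false) _ _
  (al := (k%:R - 1) * (l + n%:R - 2 * k%:R + 2)) (be := (k%:R - 1) * (2 * l - k%:R + 2))
  (ga := (l - n%:R + k%:R) * (l + 1))) => //=; rewrite ?dE ?rE ?r1E ?qE ?q1E.
- lia.
- lia.
- by apply: mulr_gt0; lra.
- by apply: mulr_gt0; lra.
- by apply: mulr_gt0; lra.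
- ring.
- ring.
- by rewrite -[LHS]addr0 -root2 /char2; ring.
Qed.

Lemma cubic_ivt (R : rcfType) (c2 c1 c0 a b : R) : a <= b ->
    a ^+ 3 + c2 * a ^+ 2 + c1 * a + c0 < 0 -> 0 < b ^+ 3 + c2 * b ^+ 2 + c1 * b + c0 ->
  exists2 x, a < x < b & x ^+ 3 + c2 * x ^+ 2 + c1 * x + c0 = 0.
Proof.
move=> le_ab fa_lt0 fb_gt0.
pose p : {poly R} := 'X^3 + c2%:P * 'X^2 + c1%:P * 'X + c0%:P.
have pE x : p.[x] = x ^+ 3 + c2 * x ^+ 2 + c1 * x + c0 by rewrite /p !hornerE.
have [|x x_in /rootP px0] := @poly_ivtoo _ p a b le_ab; first by rewrite !pE nmulr_rlt0.
by exists x; [rewrite in_itv in x_in | rewrite -pE].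
Qed.

Section CharacteristicCubics.
Variables (R : rcfType) (N D : R).

Lemma char1_N_sub_D : char1 N D (N - D) = - (4 * (D - 1) * (N - D) ^+ 2).
Proof. by rewrite /char1; ring. Qed.

Lemma char1_N_add_3D :
  char1 N D (N + 3 * D) = 4 * N ^+ 2 + 20 * N * D + 12 * N * D ^+ 2 + 28 * D ^+ 2 + 36 * D ^+ 3.
Proof. by rewrite /char1; ring. Qed.

Lemma char2_N_sub_D : char2 N D (N - D) = - ((D - 1) * (2 * N - 3 * D + 2) ^+ 2).
Proof. by rewrite /char2; ring. Qed.

Lemma char2_char1 l : (l + 2 * D - 1) * char2 N D l =
  (l + D + 1) * char1 N D l
  + (D - 1) * (D - 2) * ((5 * D - 2) * l + 2 * D * (N - 2 * D) + 5 * D - 2).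
Proof. by rewrite /char1 /char2; ring. Qed.

Lemma char1_root_gt : 1 < D -> D < N -> exists2 a, N - D < a & char1 N D a = 0.
Proof.
move=> D_gt1 N_gtD.
have [|||a /andP[a_gt _] a_root] := @cubic_ivt _ (3 - N) (N - 3 * N * D + 3 * D ^+ 2)
  (D ^+ 2 - N * D) (N - D) (N + 3 * D).
- lra.
- rewrite -[X in X < 0]/(char1 N D _) char1_N_sub_D oppr_lt0.
  by rewrite !mulr_gt0 ?exprn_gt0 //; lra.
- rewrite -[X in 0 < X]/(char1 N D _) char1_N_add_3D.
  by rewrite !addr_gt0 ?mulr_gt0 ?exprn_gt0 //; lra.
by exists a.
Qed.

Lemma char2_root_between a : 2 < D -> 2 * D <= N -> N - D < a -> char1 N D a = 0 ->
  exists2 b, N - D < b < a & char2 N D b = 0.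
Proof.
move=> D_gt2 N_ge a_gt a_root.
have char2_a_gt0 : 0 < char2 N D a.
  have a_gt0 : 0 < a by lra.
  have rhs_gt0 : 0 < (D - 1) * (D - 2) * ((5 * D - 2) * a + 2 * D * (N - 2 * D) + 5 * D - 2).
    have : 0 < (5 * D - 2) * a by apply: mulr_gt0; lra.
    have : 0 <= 2 * D * (N - 2 * D) by apply: mulr_ge0; [apply: mulr_ge0|]; lra.
    by move=> *; apply: mulr_gt0; [apply: mulr_gt0|]; lra.
  rewrite -(@pmulr_rgt0 _ (a + 2 * D - 1)); last lra.
  by rewrite char2_char1 a_root mulr0 add0r.
have [|||b b_in b_root] := @cubic_ivt _ (5 - N - D) (5 * D ^+ 2 - 2 * N * D - N - 8 * D + 8)
  (N * D ^+ 2 - 3 * N * D - 2 * D ^+ 3 + 8 * D ^+ 2 - 8 * D + 4) (N - D) a.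
- lra.
- rewrite -[X in X < 0]/(char2 N D _) char2_N_sub_D oppr_lt0.
  by rewrite !mulr_gt0 ?exprn_gt0 //; lra.
- exact: char2_a_gt0.
by exists b.
Qed.

End CharacteristicCubics.

Theorem mainTheorem7 (R : realType) (delta n : nat) :
  (3 <= delta)%N -> (8 * delta - 7 <= n)%N ->
  exists a b : R,
    is_largest_eigenvalue
      (dist_matrix R (gjoin (complete_graph 2%N)
                        (gunion (complete_graph (n - delta - 1)%N) (complete_graph (delta - 1)%N)))) a /\
    is_largest_eigenvalue
      (dist_matrix R (gjoin (complete_graph delta)
                        (gunion (complete_graph (n - 2 * delta + 1)%N) (edgeless_graph (delta - 1)%N)))) b /\
    b < a.
Proof.
move=> delta_ge3 n_ge.
have n_ge2delta : (2 * delta <= n)%N by lia.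
have D_gt2 : 2 < delta%:R :> R by rewrite ltr_nat.
have N_ge : 2 * delta%:R <= n%:R :> R by rewrite -natrM ler_nat.
have [a a_gt a_root] : exists2 a : R, n%:R - delta%:R < a & char1 n%:R delta%:R a = 0.
  by apply: char1_root_gt; lra.
have [b /andP[b_gt b_lt_a] b_root] := char2_root_between D_gt2 N_ge a_gt a_root.
exists a, b; split; [|split] => //.
- by apply: join_K2_cliques_largest_eigenvalue => //; lia.
- by apply: join_Kk_clique_coclique_largest_eigenvalue => //; lia.
Qed.
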